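(* Let $a>0$, $b,c\ge 0$, and consider the system $$\dot x=x(1-y+cx-axz),\qquad \dot y=y(-1+x),\qquad \dot z=z(-b+ax^2).$$ Let $f$ be an irreducible Darboux polynomial of degree greater than one with non-zero cofactor $$K=\alpha_0+\alpha_1x+\alpha_2y+\alpha_3z+N_4a\,x^2-N_6a\,xz,$$ where $\alpha_i\in\mathbb{C}$ and $N_4,N_6\in\mathbb{N}\cup\{0\}$. Then $\alpha_0=\alpha_1=\alpha_3=N_4=N_6=0$.
   Context: A Darboux polynomial is $f\in\mathbb{C}[x,y,z]$ with $x(1-y+cx-axz)f_x+y(-1+x)f_y+z(-b+ax^2)f_z=Kf$ for a polynomial cofactor $K$ of degree at most two. *)

From HB Require Import structures.
From mathcomp Require Import all_boot all_order all_algebra.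
From mathcomp Require Import complex.
From mathcomp Require Import mpoly.
Set Implicit Arguments. Unset Strict Implicit. Unset Printing Implicit Defensive.
Import Order.TTheory GRing.Theory Num.Theory.
Local Open Scope ring_scope.

Section Defs.
Variable R : rcfType.
Local Notation C := (R[i]).
Local Notation P := {mpoly C[3]}.

Definition ofR (r : R) : C := Complex r 0.

Definition vx : P := 'X_(0 : 'I_3).
Definition vy : P := 'X_(1 : 'I_3).
Definition vz : P := 'X_(2 : 'I_3).
Definition cst (c : C) : P := c%:MP.

Definition Px (a c : R) : P := vx * (1 - vy + cst (ofR c) * vx - cst (ofR a) * vx * vz).
Definition Py : P := vy * (-1 + vx).
Definition Pz (a b : R) : P := vz * (- cst (ofR b) + cst (ofR a) * vx ^+ 2).

Definition vfield (a b c : R) (f : P) : P :=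
  Px a c * f^`M(0 : 'I_3) + Py * f^`M(1 : 'I_3) + Pz a b * f^`M(2 : 'I_3).

Definition darboux (a b c : R) (f K : P) : Prop :=
  f != 0 /\ (msize K <= 3)%N /\ vfield a b c f = K * f.

(* total degree (for nonzero p); msize p = 1 + degree *)
Definition tdeg (p : P) : nat := (msize p).-1.

Definition mirreducible (f : P) : Prop :=
  (1 < msize f)%N /\
  forall g h : P, f = g * h -> (msize g <= 1)%N \/ (msize h <= 1)%N.

End Defs.

From HB Require Import structures.
From mathcomp Require Import all_boot all_order all_algebra.
From mathcomp Require Import complex mpoly.
From mathcomp Require Import ring zify.
Set Implicit Arguments. Unset Strict Implicit. Unset Printing Implicit Defensive.
Import Order.TTheory GRing.Theory Num.Theory.
Local Open Scope ring_scope.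

(* Write f_pqr for the coefficient of x^p y^q z^r in f, extended by zero to
   negative exponents.  Comparing coefficients in X f = K f gives a linear
   recurrence between f_pqr and five of its neighbours (coef3_recurrence).
   Since f is irreducible of degree > 1, no variable divides f, so f has nonzero
   coefficients on each coordinate face.  Evaluating the recurrence just beyond
   an extremal nonzero coefficient of a face leaves a single term, which yields:
   on x = 0, alpha_3 = 0 and alpha_0 = -(q + b r) <= 0; on z = 0, N_4 = 0; on
   y = 0, the top row in z is concentrated at x-degree N_6 (so alpha_1 = c N_6),
   and descending row by row reaches a nonzero coefficient of x^k with
   k >= N_6, which makes alpha_0 an integer >= N_6.  Hence alpha_0 = N_6 = 0. *)

Lemma seq_argmax (T : eqType) d (O : orderType d) (w : T -> O) (s : seq T) x :
  x \in s -> exists2 y, y \in s & forall z, z \in s -> (w z <= w y)%O.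
Proof.
elim: s x => // y s IH x _; case: s IH => [_ | z s IH].
  by exists y; rewrite ?mem_head // => z; rewrite inE => /eqP ->.
have [m ms m_max] := IH z (mem_head _ _).
case: (leP (w y) (w m)) => [le_ym | lt_my].
  exists m; first by rewrite inE ms orbT.
  by move=> t; rewrite inE => /predU1P [-> | /m_max].
exists y; first exact: mem_head.
by move=> t; rewrite inE => /predU1P [-> // | /m_max le_tm]; apply: le_trans le_tm (ltW lt_my).
Qed.

Lemma mulf_nzr_eq0 (K : idomainType) (x y : K) : y != 0 -> x * y = 0 -> x = 0.
Proof. by move=> y0 /eqP; rewrite mulf_eq0 (negbTE y0) orbF => /eqP. Qed.

Lemma mcoeffMXU (n : nat) (R : comNzRingType) (h : {mpoly R[n]}) (i : 'I_n) m :
  (h * 'X_i)@_m = if (0 < m i)%N then h@_(m - U_(i)) else 0.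
Proof.
case: ifP => m_i.
  by rewrite -{1}(submK (m := U_(i)) (m' := m)) 1?addmC ?mcoeffMX // lep1mP -lt0n.
apply/eqP; rewrite mcoeff_eq0; apply/negP => m_supp.
move: (perm_mem (msuppMX h U_(i)) m); rewrite m_supp => /esym /mapP [m' _ Em].
by move: m_i; rewrite Em mnmDE mnm1E eqxx.
Qed.

Lemma ofRE (R : rcfType) : @ofR R =1 real_complex R.
Proof. by []. Qed.

Lemma ofRM (R : rcfType) : {morph @ofR R : x y / x * y}.
Proof. exact: (rmorphM (real_complex R)). Qed.

Lemma ofR_nat (R : rcfType) n : ofR (n%:R : R) = n%:R.
Proof. exact: (rmorph_nat (real_complex R)). Qed.

Lemma ofR_int (R : rcfType) (n : int) : ofR (n%:~R : R) = n%:~R.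
Proof. exact: (rmorph_int (real_complex R)). Qed.

Lemma ofR_inj (R : rcfType) : injective (@ofR R).
Proof. by move=> x y []. Qed.

Lemma ofR_eq0 (R : rcfType) (x : R) : (ofR x == 0) = (x == 0).
Proof. exact: (inj_eq (@ofR_inj R) x 0). Qed.

Definition mnm3 (p q r : nat) : 'X_{1..3} := [multinom [tuple p; q; r]].

(* Locked so that [ring] treats coefficients as atoms. *)
HB.lock Definition coef3 (R : rcfType) (h : {mpoly R[i][3]}) (p q r : int) : R[i] :=
  if [&& 0 <= p, 0 <= q & 0 <= r] then h@_(mnm3 `|p| `|q| `|r|) else 0.

Section Coefficients.
Variable R : rcfType.
Local Notation C := R[i].
Local Notation P := {mpoly C[3]}.

Lemma coef3_mnm (h : P) (m : 'X_{1..3}) :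
  coef3 h (m (0 : 'I_3)) (m (1 : 'I_3)) (m (2 : 'I_3)) = h@_m.
Proof.
rewrite unlock /=; congr (h@_ _); apply/mnmP => -[[|[|[|k]]] hk] //.
all: by rewrite mnm_tnth; congr (m _); apply: val_inj.
Qed.

Lemma coef3_neq0P (h : P) p q r : coef3 h p q r != 0 ->
  exists2 m, m \in msupp h & [/\ p = m (0 : 'I_3), q = m (1 : 'I_3) & r = m (2 : 'I_3)].
Proof.
rewrite unlock; case: ifP => [/and3P [p0 q0 r0] nz|]; last by rewrite eqxx.
by exists (mnm3 `|p| `|q| `|r|); rewrite ?mcoeff_msupp // !mnm_tnth /= !gez0_abs.
Qed.

Lemma coef3_neq0_ge0 (h : P) p q r : coef3 h p q r != 0 -> [/\ 0 <= p, 0 <= q & 0 <= r].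
Proof. by case/coef3_neq0P=> m _ [-> -> ->]. Qed.

Lemma coef3_extremal (h : P) (S : int -> int -> int -> bool) (w : int -> int -> int -> int)
    p q r :
  S p q r -> coef3 h p q r != 0 ->
  exists p' q' r', [/\ S p' q' r', coef3 h p' q' r' != 0 &
    forall p'' q'' r'', S p'' q'' r'' -> w p' q' r' < w p'' q'' r'' -> coef3 h p'' q'' r'' = 0].
Proof.
move=> Spqr /coef3_neq0P [m0 m0_supp [ep eq er]].
pose S' (m : 'X_{1..3}) := S (m (0 : 'I_3)) (m (1 : 'I_3)) (m (2 : 'I_3)).
have m0_in : m0 \in [seq m <- msupp h | S' m] by rewrite mem_filter /S' -ep -eq -er Spqr.
have [m] := seq_argmax (fun m : 'X_{1..3} => w (m (0 : 'I_3)) (m (1 : 'I_3)) (m (2 : 'I_3))) m0_in.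
rewrite mem_filter => /andP [Sm m_supp] m_max.
exists (m (0 : 'I_3)), (m (1 : 'I_3)), (m (2 : 'I_3)); split=> //.
  by rewrite coef3_mnm -mcoeff_msupp.
move=> p' q' r' S'pqr; rewrite ltNge; apply: contraNeq => /coef3_neq0P [m' m'_supp].
case=> ep' eq' er'; rewrite ep' eq' er' in S'pqr *.
by apply: m_max; rewrite mem_filter m'_supp andbT.
Qed.

Lemma coef3_Negzx (h : P) n q r : coef3 h (Negz n) q r = 0.
Proof. by rewrite unlock. Qed.

Lemma coef3_Negzy (h : P) p n r : coef3 h p (Negz n) r = 0.
Proof. by rewrite unlock andbC. Qed.

Lemma coef3_Negzz (h : P) p q n : coef3 h p q (Negz n) = 0.
Proof. by rewrite unlock !andbF. Qed.

Lemma coef3D (g h : P) p q r : coef3 (g + h) p q r = coef3 g p q r + coef3 h p q r.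
Proof. by rewrite unlock; case: ifP; rewrite ?addr0 // mcoeffD. Qed.

Lemma coef3N (h : P) p q r : coef3 (- h) p q r = - coef3 h p q r.
Proof. by rewrite unlock; case: ifP; rewrite ?oppr0 // mcoeffN. Qed.

Lemma coef3CM (x : C) (h : P) p q r : coef3 (cst x * h) p q r = x * coef3 h p q r.
Proof. by rewrite unlock; case: ifP; rewrite ?mulr0 // mcoeffCM. Qed.

Lemma mnm3_subU (p q r : nat) :
  [/\ (mnm3 p.+1 q r - U_(0%R : 'I_3))%MM = mnm3 p q r,
      (mnm3 p q.+1 r - U_(1%R : 'I_3))%MM = mnm3 p q r &
      (mnm3 p q r.+1 - U_(2%R : 'I_3))%MM = mnm3 p q r].
Proof.
by split; apply/mnmP => -[[|[|[|k]]] hk] //; rewrite mnmBE mnm1E !mnm_tnth /= ?subn0 ?subn1.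
Qed.

Lemma mnm3_addU (p q r : nat) :
  [/\ (mnm3 p q r + U_(0%R : 'I_3))%MM = mnm3 p.+1 q r,
      (mnm3 p q r + U_(1%R : 'I_3))%MM = mnm3 p q.+1 r &
      (mnm3 p q r + U_(2%R : 'I_3))%MM = mnm3 p q r.+1].
Proof.
by split; apply/mnmP => -[[|[|[|k]]] hk] //; rewrite mnmDE mnm1E !mnm_tnth /= ?addn0 ?addn1.
Qed.

Lemma coef3Mx (h : P) p q r : coef3 (h * vx R) p q r = coef3 h (p - 1) q r.
Proof.
rewrite unlock /vx; case: p => [[|p]|p]; case: q => q; case: r => r //=.
all: rewrite mcoeffMXU ?mnm_tnth //= subn1 /=.
by case: (mnm3_subU p q r) => -> _ _.
Qed.

Lemma coef3My (h : P) p q r : coef3 (h * vy R) p q r = coef3 h p (q - 1) r.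
Proof.
rewrite unlock /vy; case: p => p; case: q => [[|q]|q]; case: r => r //=.
all: rewrite mcoeffMXU ?mnm_tnth //= subn1 /=.
by case: (mnm3_subU p q r) => _ -> _.
Qed.

Lemma coef3Mz (h : P) p q r : coef3 (h * vz R) p q r = coef3 h p q (r - 1).
Proof.
rewrite unlock /vz; case: p => p; case: q => q; case: r => [[|r]|r] //=.
all: rewrite mcoeffMXU ?mnm_tnth //= ?andbF // subn1 /=.
by case: (mnm3_subU p q r) => _ _ ->.
Qed.

Lemma coef3_mderivx (h : P) p q r :
  coef3 (h^`M(0 : 'I_3)) p q r = (p + 1)%:~R * coef3 h (p + 1) q r.
Proof.
rewrite unlock; case: p => [p|[|p]]; case: q => q; case: r => r; rewrite ?mulr0 //=.
  rewrite mcoeff_mderiv mnm_tnth /= -PoszD addn1 mulr_natl.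
  by case: (mnm3_addU p q r) => -> _ _.
by rewrite -[Negz 0 + 1]/(Posz 0) mul0r.
Qed.

Lemma coef3_mderivy (h : P) p q r :
  coef3 (h^`M(1 : 'I_3)) p q r = (q + 1)%:~R * coef3 h p (q + 1) r.
Proof.
rewrite unlock; case: p => p; case: q => [q|[|q]]; case: r => r; rewrite ?mulr0 //=.
  rewrite mcoeff_mderiv mnm_tnth /= -PoszD addn1 mulr_natl.
  by case: (mnm3_addU p q r) => _ -> _.
by rewrite -[Negz 0 + 1]/(Posz 0) mul0r.
Qed.

Lemma coef3_mderivz (h : P) p q r :
  coef3 (h^`M(2 : 'I_3)) p q r = (r + 1)%:~R * coef3 h p q (r + 1).
Proof.
rewrite unlock; case: p => p; case: q => q; case: r => [r|[|r]]; rewrite ?mulr0 ?andbF //=.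
  rewrite mcoeff_mderiv mnm_tnth /= -PoszD addn1 mulr_natl.
  by case: (mnm3_addU p q r) => _ _ ->.
by rewrite -[Negz 0 + 1]/(Posz 0) mul0r.
Qed.

Lemma coef3_mderivxMx (h : P) p q r :
  coef3 (h^`M(0 : 'I_3) * vx R) p q r = p%:~R * coef3 h p q r.
Proof. by rewrite coef3Mx coef3_mderivx subrK. Qed.

Lemma coef3_mderivyMy (h : P) p q r :
  coef3 (h^`M(1 : 'I_3) * vy R) p q r = q%:~R * coef3 h p q r.
Proof. by rewrite coef3My coef3_mderivy subrK. Qed.

Lemma coef3_mderivzMz (h : P) p q r :
  coef3 (h^`M(2 : 'I_3) * vz R) p q r = r%:~R * coef3 h p q r.
Proof. by rewrite coef3Mz coef3_mderivz subrK. Qed.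

End Coefficients.

Arguments coef3_extremal {R h} S w {p q r}.

Lemma vfieldE (R : rcfType) (a b c : R) (f : {mpoly R[i][3]}) :
  vfield a b c f =
    f^`M(0 : 'I_3) * vx R - f^`M(0 : 'I_3) * vx R * vy R
    + cst (ofR c) * (f^`M(0 : 'I_3) * vx R * vx R)
    - cst (ofR a) * (f^`M(0 : 'I_3) * vx R * vx R * vz R)
    - f^`M(1 : 'I_3) * vy R + f^`M(1 : 'I_3) * vy R * vx R
    - cst (ofR b) * (f^`M(2 : 'I_3) * vz R)
    + cst (ofR a) * (f^`M(2 : 'I_3) * vz R * vx R * vx R).
Proof. by rewrite /vfield /Px /Py /Pz; ring. Qed.

Section Recurrence.
Variables (R : rcfType) (f : {mpoly R[i][3]}).
Local Notation F := (coef3 f).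

Lemma coef3_vfield (a b c : R) p q r :
  coef3 (vfield a b c f) p q r =
    p%:~R * F p q r - p%:~R * F p (q - 1) r + ofR c * ((p - 1)%:~R * F (p - 1) q r)
    - ofR a * ((p - 1)%:~R * F (p - 1) q (r - 1))
    - q%:~R * F p q r + q%:~R * F (p - 1) q r
    - ofR b * (r%:~R * F p q r) + ofR a * (r%:~R * F (p - 1 - 1) q r).
Proof.
rewrite vfieldE !(coef3D, coef3N, coef3CM, coef3_mderivxMx, coef3_mderivyMy, coef3_mderivzMz).
by rewrite !(coef3Mx, coef3My, coef3Mz, coef3_mderivxMx, coef3_mderivyMy, coef3_mderivzMz).
Qed.

Lemma coef3_cofactorM (k0 k1 k2 k3 k4 k6 : R[i]) p q r :
  coef3 ((cst k0 + cst k1 * vx R + cst k2 * vy R + cst k3 * vz R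
          + cst k4 * vx R ^+ 2 - cst k6 * vx R * vz R) * f) p q r =
    k0 * F p q r + k1 * F (p - 1) q r + k2 * F p (q - 1) r + k3 * F p q (r - 1)
    + k4 * F (p - 1 - 1) q r - k6 * F (p - 1) q (r - 1).
Proof.
have -> : (cst k0 + cst k1 * vx R + cst k2 * vy R + cst k3 * vz R
          + cst k4 * vx R ^+ 2 - cst k6 * vx R * vz R) * f =
    cst k0 * f + cst k1 * (f * vx R) + cst k2 * (f * vy R) + cst k3 * (f * vz R)
    + cst k4 * (f * vx R * vx R) - cst k6 * (f * vx R * vz R) by ring.
by rewrite !(coef3D, coef3N, coef3CM, coef3Mx, coef3My, coef3Mz).
Qed.

End Recurrence.

Section Darboux.
Variables (R : rcfType) (a b c : R) (al0 al1 al2 al3 : R[i]) (N4 N6 : nat).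
Variable f : {mpoly R[i][3]}.
Hypothesis f_darboux :
  vfield a b c f =
  (cst al0 + cst al1 * vx R + cst al2 * vy R + cst al3 * vz R
   + cst (ofR (N4%:R * a)) * vx R ^+ 2 - cst (ofR (N6%:R * a)) * vx R * vz R) * f.
Hypotheses (a_neq0 : a != 0) (b_ge0 : 0 <= b).

Local Notation F := (coef3 f).

Lemma coef3_recurrence p q r :
  (p%:~R - q%:~R - ofR b * r%:~R - al0) * F p q r
  + (ofR c * (p - 1)%:~R + q%:~R - al1) * F (p - 1) q r
  - (p%:~R + al2) * F p (q - 1) r
  - al3 * F p q (r - 1)
  + ofR a * (r%:~R - N4%:R) * F (p - 2) q r
  - ofR a * ((p - 1)%:~R - N6%:R) * F (p - 1) q (r - 1) = 0.
Proof.
have := congr1 (fun h => coef3 h p q r) f_darboux.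
have -> : p - 2 = p - 1 - 1 by ring.
rewrite coef3_vfield coef3_cofactorM !ofRM !ofR_nat => /eqP.
by rewrite -subr_eq0 => /eqP <-; ring.
Qed.

Lemma coef3_rec_x0 q r :
  (- q%:~R - ofR b * r%:~R - al0) * F 0 q r - al2 * F 0 (q - 1) r - al3 * F 0 q (r - 1) = 0.
Proof.
have := coef3_recurrence 0 q r.
by rewrite !sub0r !coef3_Negzx => rec; rewrite -[RHS]rec; ring.
Qed.

Lemma coef3_rec_z0 p q :
  (p%:~R - q%:~R - al0) * F p q 0 + (ofR c * (p - 1)%:~R + q%:~R - al1) * F (p - 1) q 0
  - (p%:~R + al2) * F p (q - 1) 0 - ofR a * N4%:R * F (p - 2) q 0 = 0.
Proof.
have := coef3_recurrence p q 0.
by rewrite !sub0r !coef3_Negzz => rec; rewrite -[RHS]rec; ring.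
Qed.

Hypothesis x_free : exists q r, F 0 q r != 0.
Hypothesis y_free : exists p r, F p 0 r != 0.
Hypothesis z_free : exists p q, F p q 0 != 0.

Lemma al3_eq0 : al3 = 0.
Proof.
have [q0 [r0 nz0]] := x_free.
have [_ [q [r [/eqP-> nz top]]]] :=
  coef3_extremal (fun p _ _ => p == 0) (fun _ _ r => r) (eqxx 0) nz0.
have above q' : F 0 q' (r + 1) = 0 by apply: top => //; lia.
have := coef3_rec_x0 q (r + 1); rewrite !above addrK => rec.
by apply: (mulf_nzr_eq0 nz); rewrite -[RHS]oppr0 -rec; ring.
Qed.

Lemma al0_nonpos : exists2 x : R, x <= 0 & al0 = ofR x.
Proof.
have [q0 [r0 nz0]] := x_free.
have [_ [q [r [/eqP-> nz bottom]]]] :=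
  coef3_extremal (fun p _ _ => p == 0) (fun _ q _ => - q) (eqxx 0) nz0.
have [_ q_ge0 r_ge0] := coef3_neq0_ge0 nz.
have below : F 0 (q - 1) r = 0 by apply: bottom => //; lia.
have := coef3_rec_x0 q r; rewrite below al3_eq0 => rec.
have : (- q%:~R - ofR b * r%:~R - al0) * F 0 q r = 0 by rewrite -[RHS]rec; ring.
move/(mulf_nzr_eq0 nz)/eqP; rewrite subr_eq0 eq_sym => /eqP ->.
exists (- (q%:~R + b * r%:~R)).
  by rewrite oppr_le0 addr_ge0 ?mulr_ge0 ?ler0z.
by rewrite [RHS]ofRE rmorphN rmorphD rmorphM !rmorph_int opprD.
Qed.

Lemma N4_eq0 : N4 = 0%N.
Proof.
have [p0 [q0 nz0]] := z_free.
have [p [q [_ [/eqP-> nz top]]]] :=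
  coef3_extremal (fun _ _ r => r == 0) (fun p _ _ => p) (eqxx 0) nz0.
have above p' q' : p < p' -> F p' q' 0 = 0 by move=> lt_pp'; apply: top.
have := coef3_rec_z0 (p + 2) q.
rewrite addrK !(above (p + 2)) ?(above (p + 2 - 1)) ?ltrDl //; last by lia.
move=> rec.
have : ofR a * N4%:R * F p q 0 = 0 by rewrite -[RHS]oppr0 -rec; ring.
move/(mulf_nzr_eq0 nz)/eqP; rewrite mulf_eq0 ofR_eq0 (negbTE a_neq0) pnatr_eq0.
by move/eqP.
Qed.

Lemma coef3_rec_y0 p r :
  (p%:~R - ofR b * r%:~R - al0) * F p 0 r + (ofR c * (p - 1)%:~R - al1) * F (p - 1) 0 r
  + ofR a * r%:~R * F (p - 2) 0 r - ofR a * ((p - 1)%:~R - N6%:R) * F (p - 1) 0 (r - 1) = 0.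
Proof.
have := coef3_recurrence p 0 r.
by rewrite al3_eq0 N4_eq0 sub0r coef3_Negzy => rec; rewrite -[RHS]rec; ring.
Qed.

Lemma coef3_y0_descent_step d (r : nat) :
  F d 0 r.+1 != 0 -> exists2 d', d < d' & F d' 0 r != 0.
Proof.
move=> nz0.
have [D [_ [_ [/eqP [-> ->] nz top]]]] :=
  coef3_extremal (fun _ q r' => (q, r') == (0, r.+1%:Z)) (fun p _ _ => p) (eqxx _) nz0.
have above p : D < p -> F p 0 r.+1 = 0 by move=> lt_Dp; apply: top.
have le_dD : d <= D by rewrite leNgt; apply: contraNN nz0 => /above ->.
have := coef3_rec_y0 (D + 2) r.+1.
have -> : D + 2 - 1 = D + 1 by ring.
have -> : r.+1%:Z - 1 = r by rewrite -addn1 PoszD addrK.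
rewrite addrK (above (D + 2)) ?(above (D + 1)) ?ltrDl // => rec.
exists (D + 1); first by lia.
apply: contraNneq nz => nz'.
have : ofR a * r.+1%:R * F D 0 r.+1 = 0 by rewrite -[RHS]rec nz'; ring.
by move/eqP; rewrite !mulf_eq0 ofR_eq0 (negbTE a_neq0) pnatr_eq0.
Qed.

Lemma coef3_y0_descent (n : nat) d :
  F d 0 n != 0 -> exists2 d', d + n <= d' & F d' 0 0 != 0.
Proof.
elim: n d => [|n IH] d nz; first by exists d; rewrite ?addr0.
have [d1 lt_dd1 nz1] := coef3_y0_descent_step nz.
have [d2 le_d2 nz2] := IH d1 nz1.
by exists d2 => //; lia.
Qed.

Lemma coef3_y0_top_row :
  exists n : nat, F N6 0 n != 0 /\ forall p : int, p != N6 -> F p 0 n = 0.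
Proof.
have [p0 [r0 nz0]] := y_free.
have [p [_ [n [/eqP-> nz top]]]] :=
  coef3_extremal (fun _ q _ => q == 0) (fun _ _ r => r) (eqxx 0) nz0.
have above p' : F p' 0 (n + 1) = 0 by apply: top => //; rewrite ltrDl.
have row_N6 p' : F p' 0 n != 0 -> p' = N6.
  move=> nz'; have := coef3_rec_y0 (p' + 1) (n + 1).
  rewrite !above !addrK => rec.
  have : ofR a * (p'%:~R - N6%:R) * F p' 0 n = 0 by rewrite -[RHS]oppr0 -rec; ring.
  move/(mulf_nzr_eq0 nz')/eqP; rewrite mulf_eq0 ofR_eq0 (negbTE a_neq0) subr_eq0.
  by rewrite pmulrn eqr_int => /eqP.
have [_ _] := coef3_neq0_ge0 nz; case: n {top above} nz row_N6 => // n nz row_N6 _.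
exists n; split; first by rewrite -(row_N6 _ nz).
by move=> p' ne; apply/eqP; apply: contraNT ne => /row_N6 ->.
Qed.

Lemma al1_eq : al1 = ofR c * N6%:R.
Proof.
have [n [nz row]] := coef3_y0_top_row.
have right1 : F (N6%:Z + 1) 0 n = 0 by apply: row; lia.
have left1 : F (N6%:Z - 1) 0 n = 0 by apply: row; lia.
have := coef3_rec_y0 (N6%:Z + 1) n.
have -> : N6%:Z + 1 - 2 = N6%:Z - 1 by ring.
rewrite addrK right1 left1 => rec.
have : (ofR c * N6%:R - al1) * F N6 0 n = 0 by rewrite -[RHS]rec; ring.
by move/(mulf_nzr_eq0 nz)/eqP; rewrite subr_eq0 eq_sym => /eqP.
Qed.

Lemma al0_int : exists2 m : int, N6%:Z <= m & al0 = m%:~R.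
Proof.
have [n [nz row]] := coef3_y0_top_row.
have [k le_k nzk] := coef3_y0_descent nz.
have [E [_ [_ [/eqP [-> ->] nzE top]]]] :=
  coef3_extremal (fun _ q r => (q, r) == (0, 0)) (fun p _ _ => p) (eqxx _) nzk.
have above p : E < p -> F p 0 0 = 0 by move=> lt_Ep; apply: top.
have le_kE : k <= E by rewrite leNgt; apply: contraNN nzk => /above ->.
have al1E : al1 = ofR c * E%:~R.
  have := coef3_rec_y0 (E + 1) 0.
  rewrite addrK (above (E + 1)) ?ltrDl // sub0r coef3_Negzz => rec.
  have : (ofR c * E%:~R - al1) * F E 0 0 = 0 by rewrite -[RHS]rec; ring.
  by move/(mulf_nzr_eq0 nzE)/eqP; rewrite subr_eq0 eq_sym => /eqP.
have := coef3_rec_y0 E 0; rewrite sub0r coef3_Negzz.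
have [c0 | c_neq0] := eqVneq c 0.
  have ofR_c0 : ofR c = 0 by apply/eqP; rewrite ofR_eq0 c0.
  rewrite al1_eq ofR_c0 => rec; exists E; first by lia.
  have : (E%:~R - al0) * F E 0 0 = 0 by rewrite -[RHS]rec; ring.
  by move/(mulf_nzr_eq0 nzE)/eqP; rewrite subr_eq0 eq_sym => /eqP.
have EN6 : E = N6.
  apply/eqP; rewrite -(eqr_int R[i]) -pmulrn; apply/eqP/(mulfI (_ : ofR c != 0)).
    by rewrite ofR_eq0.
  by rewrite -al1E al1_eq.
have n0 : n = 0%N by lia.
rewrite n0 in row; rewrite EN6 (row (N6%:Z - 1)) in nzE *; last by lia.
move=> rec; exists N6 => //.
have : (N6%:R - al0) * F N6 0 0 = 0 by rewrite -[RHS]rec; ring.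
by move/(mulf_nzr_eq0 nzE)/eqP; rewrite subr_eq0 eq_sym => /eqP.
Qed.

Lemma darboux_cofactor_eq0 : [/\ al0 = 0, al1 = 0, al3 = 0, N4 = 0%N & N6 = 0%N].
Proof.
have [x x_le0 al0x] := al0_nonpos.
have [m le_N6m al0m] := al0_int.
have xm : x = m%:~R by apply: ofR_inj; rewrite -al0x al0m ofR_int.
have m_le0 : m <= 0 by rewrite -(lerz0 R) -xm.
have m0 : m = 0 by lia.
have N6_0 : N6 = 0%N by lia.
by split; rewrite ?al0m ?m0 ?al1_eq ?N6_0 ?mulr0 ?al3_eq0 ?N4_eq0.
Qed.

End Darboux.

Section Irreducible.
Variable R : rcfType.
Local Notation P := {mpoly R[i][3]}.

Lemma mirreducible_msupp_freeX (f : P) (i : 'I_3) :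
  mirreducible f -> (1 < tdeg f)%N -> exists2 m, m \in msupp f & m i = 0%N.
Proof.
move=> [_ irr] dg.
have [/hasP [m m_supp /eqP m_i] | all_X] := boolP (has (fun m : 'X_{1..3} => m i == 0%N) (msupp f)).
  by exists m.
pose g : P := \sum_(m <- msupp f) f@_m *: 'X_[m - U_(i)].
have fE : f = g * 'X_i.
  rewrite {1}(mpolyE f) /g mulr_suml; apply: eq_big_seq => m m_supp.
  rewrite -scalerAl -mpolyXD submK // lep1mP.
  by apply: contra all_X => m_i; apply/hasP; exists m.
case: (irr g 'X_i fE) => [/msize1_polyC g_const | ]; last by rewrite msizeX mdeg1.
have : (msize f <= 2)%N.
  rewrite fE g_const mul_mpolyC; apply: leq_trans (msizeZ_le _ _) _.
  by rewrite msizeX mdeg1.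
by move: dg; rewrite /tdeg; case: (msize f) => [|[|[|k]]].
Qed.

Lemma mirreducible_faces_neq0 (f : P) : mirreducible f -> (1 < tdeg f)%N ->
  [/\ exists q r, coef3 f 0 q r != 0, exists p r, coef3 f p 0 r != 0
    & exists p q, coef3 f p q 0 != 0].
Proof.
move=> irr dg; split.
- have [m m_supp m0] := mirreducible_msupp_freeX 0 irr dg.
  by exists (m 1), (m 2); move: m_supp; rewrite mcoeff_msupp -coef3_mnm m0.
- have [m m_supp m1] := mirreducible_msupp_freeX 1 irr dg.
  by exists (m 0), (m 2); move: m_supp; rewrite mcoeff_msupp -coef3_mnm m1.
- have [m m_supp m2] := mirreducible_msupp_freeX 2 irr dg.
  by exists (m 0), (m 1); move: m_supp; rewrite mcoeff_msupp -coef3_mnm m2.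
Qed.

End Irreducible.

Theorem lemma4p3 (R : rcfType) (a b c : R) (ha : 0 < a) (hb : 0 <= b) (hc : 0 <= c)
  (f : {mpoly R[i][3]}) (al0 al1 al2 al3 : R[i]) (N4 N6 : nat) :
  let K : {mpoly R[i][3]} :=
    cst al0 + cst al1 * vx R + cst al2 * vy R + cst al3 * vz R
    + cst (ofR (N4%:R * a)) * vx R ^+ 2 - cst (ofR (N6%:R * a)) * vx R * vz R in
  mirreducible f -> (1 < tdeg f)%N -> K != 0 -> darboux a b c f K ->
  [/\ al0 = 0, al1 = 0, al3 = 0, N4 = 0%N & N6 = 0%N].
Proof.
move=> K irr dg _ [_ [_ f_darboux]].
have [x_free y_free z_free] := mirreducible_faces_neq0 irr dg.
exact: darboux_cofactor_eq0 f_darboux (lt0r_neq0 ha) hb x_free y_free z_free.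
Qed.
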